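(* Let $n\ge 2$, $X=\{0,1\}^n$, let $C$ be the family of cylinders in $X$, and let $\mu$ be the uniform distribution on $X$. Then every weak $\frac14$-net for $C$ over $\mu$ has size at least $\log_2 n$.
   Context: A set $c\subseteq\{0,1\}^n$ is a cylinder if there are $Y\subseteq[n]$ and $v\in\{0,1\}^Y$ with $c=\{u\in\{0,1\}^n : u|_Y=v\}$. A weak $\varepsilon$-net for $C$ over $\mu$ is a set $S\subseteq X$ meeting every $c\in C$ with $\mu(c)\ge\varepsilon$. *)

From mathcomp Require Import all_boot.
From Stdlib Require Import Reals.

Set Implicit Arguments. Unset Strict Implicit. Unset Printing Implicit Defensive.

Definition cube (n : nat) := {ffun 'I_n -> bool}.

(* c is a cylinder: there are Y ⊆ [n] and v ∈ {0,1}^Y with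
   c = {u | u|_Y = v}.  v is represented by a total function whose values
   outside Y are irrelevant. *)
Definition cylinder (n : nat) (c : {set cube n}) : Prop :=
  exists (Y : {set 'I_n}) (v : {ffun 'I_n -> bool}),
    c = [set u : cube n | [forall i in Y, u i == v i]].

Definition unif (n : nat) (A : {set cube n}) : R :=
  (INR #|A| / INR #|[set: cube n]|)%R.

Definition weak_net_cyl (n : nat) (eps : R) (S : {set cube n}) : Prop :=
  forall c : {set cube n}, cylinder c -> (eps <= unif c)%R ->
    [exists x, (x \in S) && (x \in c)].

Definition log2 (x : R) : R := (ln x / ln 2)%R.

(* Send each coordinate i to its trace {x in S | x_i}.  If two coordinates
   i <> j had the same trace, the cylinder {u | u_i = 0, u_j = 1}, of measure
   1/4, would contain no point of S.  Hence the traces of a weak 1/4-net S are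
   pairwise distinct subsets of S, so n <= 2^|S|. *)
From mathcomp Require Import all_boot.
From Stdlib Require Import Reals Rpower Lra.

Set Implicit Arguments. Unset Strict Implicit. Unset Printing Implicit Defensive.

Section Cube.

Variable n : nat.

Definition toggle (b : bool) (i : 'I_n) (u : cube n) : cube n :=
  [ffun k => (b && (k == i)) (+) u k].

Lemma toggleK (b : bool) (i : 'I_n) : involutive (toggle b i).
Proof. by move=> u; apply/ffunP=> k; rewrite !ffunE addbA addbb. Qed.

Definition cyl2 (i j : 'I_n) : {set cube n} := [set u : cube n | ~~ u i && u j].

Lemma cylinder_cyl2 (i j : 'I_n) : i != j -> cylinder (cyl2 i j).
Proof.
move=> neq_ij; exists [set i; j], [ffun k => k == j]; apply/setP=> u.
rewrite !inE; apply/andP/forall_inP => [[ui uj] k | fixed].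
  by rewrite !inE ffunE => /orP[]/eqP->; rewrite ?(negbTE neq_ij) ?eqxx ?uj ?(negbTE ui).
have := fixed i; have := fixed j; rewrite !inE !eqxx orbT !ffunE eqxx (negbTE neq_ij).
by move=> /(_ isT)/eqP-> /(_ isT)/eqP->.
Qed.

(* Normalising u to (u_i, u_j) = (0, 1) while remembering the old bits
   embeds the cube into (bool * bool) * cyl2 i j. *)
Lemma card_cube_le_cyl2 (i j : 'I_n) : i != j ->
  #|[set: cube n]| <= 4 * #|cyl2 i j|.
Proof.
move=> neq_ij.
pose normal (u : cube n) := toggle (~~ u j) j (toggle (u i) i u).
pose code (u : cube n) := ((u i, u j), normal u).
have code_inj : injective code.
  move=> u v [ei ej /(congr1 (toggle (~~ u j) j))].
  by rewrite /normal ej !toggleK ei => /(congr1 (toggle (v i) i)); rewrite !toggleK.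
have normal_cyl2 u : normal u \in cyl2 i j.
  rewrite inE !ffunE (negbTE neq_ij) eq_sym (negbTE neq_ij) !eqxx.
  by case: (u i); case: (u j).
have -> : 4 = #|[set: bool * bool]| by rewrite cardsT card_prod card_bool.
rewrite -(card_imset _ code_inj) -cardsX.
by apply/subset_leq_card/subsetP=> _ /imsetP[u _ ->]; rewrite inE in_setT normal_cyl2.
Qed.

Lemma quarter_le_unif_cyl2 (i j : 'I_n) : i != j -> (1 / 4 <= unif (cyl2 i j))%R.
Proof.
move=> /card_cube_le_cyl2 /leP /le_INR; rewrite -multE mult_INR /unif.
have : (0 < INR #|[set: cube n]|)%R.
  by apply/lt_0_INR/ltP/card_gt0P; exists [ffun=> false].
move: (INR #|[set: cube n]|) (INR #|cyl2 i j|) => N c N_gt0.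
rewrite [INR 4]/= => le_N_4c.
apply/(Rmult_le_reg_r N) => //.
have -> : (c / N * N = c)%R by field; lra.
lra.
Qed.

Definition trace (S : {set cube n}) (i : 'I_n) : {set cube n} := [set x in S | x i].

Lemma weak_net_trace_inj (S : {set cube n}) :
  weak_net_cyl (1 / 4) S -> injective (trace S).
Proof.
move=> net i j eq_trace; apply/eqP/negPn/negP=> neq_ij.
have /existsP[x /andP[xS]] := net _ (cylinder_cyl2 neq_ij) (quarter_le_unif_cyl2 neq_ij).
rewrite inE => /andP[/negbTE xi xj].
have : (x \in trace S i) = (x \in trace S j) by rewrite eq_trace.
by rewrite !inE xS xi xj.
Qed.

Lemma weak_net_dim_le_exp2 (S : {set cube n}) :
  weak_net_cyl (1 / 4) S -> n <= expn 2 #|S|.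
Proof.
move=> /weak_net_trace_inj trace_inj.
rewrite -card_powerset -{1}(card_ord n) -(card_imset _ trace_inj).
apply/subset_leq_card/subsetP=> _ /imsetP[i _ ->].
by rewrite inE; apply/subsetP=> x; rewrite inE => /andP[].
Qed.

End Cube.

Lemma INR_expn (m k : nat) : INR (expn m k) = (INR m ^ k)%R.
Proof. by elim: k => [|k IHk] //; rewrite expnS -multE mult_INR IHk. Qed.

Lemma log2_le_of_le_exp2 (m k : nat) :
  0 < m -> m <= expn 2 k -> (log2 (INR m) <= INR k)%R.
Proof.
move=> /ltP/lt_0_INR m_gt0 /leP/le_INR; rewrite INR_expn.
change (INR 2) with 2%R => le_m_2k.
have ln2_gt0 : (0 < ln 2)%R by rewrite -ln_1; apply: ln_increasing; lra.
have : (ln (INR m) <= INR k * ln 2)%R.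
  rewrite -ln_pow; last lra.
  by case: (Rle_lt_or_eq_dec _ _ le_m_2k) => [/(ln_increasing _ _ m_gt0)|->]; lra.
move=> le_ln; apply/(Rmult_le_reg_r (ln 2)) => //.
by rewrite /log2 /Rdiv Rmult_assoc Rinv_l ?Rmult_1_r //; lra.
Qed.

Theorem claim1 (n : nat) (hn : 2 <= n) (S : {set cube n}) :
  weak_net_cyl (1 / 4)%R S -> (log2 (INR n) <= INR #|S|)%R.
Proof.
move=> net; apply: log2_le_of_le_exp2; first exact: leq_trans hn.
exact: weak_net_dim_le_exp2.
Qed.
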